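(* Let $S$ be a semigroup. If there is an element $a\in S$ with $a\in aS$ such that $\mathbf{r}_S(a)$ is finitely generated as a right congruence, then $S=US^1$ for some finite set $U\subseteq S$.
   Context: $S^1$ is $S$ if $S$ is a monoid and otherwise $S$ with an identity adjoined. $\mathbf{r}_S(a)=\{(s,t)\in S\times S\mid as=at\}$. A right congruence is finitely generated if it is the smallest right congruence containing some finite subset of $S\times S$. *)

(* A semigroup is a carrier type S with an
   associative binary operation mul (passed as explicit binders). *)
From Stdlib Require Import List.
Export ListNotations.

Definition right_congruence {S : Type} (mul : S -> S -> S)
  (rho : S -> S -> Prop) : Prop :=
  (forall s, rho s s) /\
  (forall s t, rho s t -> rho t s) /\
  (forall s t u, rho s t -> rho t u -> rho s u) /\
  (forall s t u, rho s t -> rho (mul s u) (mul t u)).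

Definition gen_right_congruence {S : Type} (mul : S -> S -> S)
  (X : list (S * S)) : S -> S -> Prop :=
  fun s t => forall rho : S -> S -> Prop,
    right_congruence mul rho ->
    (forall p, In p X -> rho (fst p) (snd p)) -> rho s t.

Definition rann {S : Type} (mul : S -> S -> S) (a : S) : S -> S -> Prop :=
  fun s t => mul a s = mul a t.

Definition fg_right_congruence {S : Type} (mul : S -> S -> S)
  (rho : S -> S -> Prop) : Prop :=
  exists X : list (S * S), forall s t, rho s t <-> gen_right_congruence mul X s t.

(* Since a = a e for some e, every pair (s, e s) lies in r_S(a).  If r_S(a) is
   generated by a finite set X of pairs, let U be the set of entries of X.  The
   relation "s = t, or both s and t lie in the right ideal U S^1" is a right
   congruence containing X, hence contains r_S(a).  So each s either equals e s,
   and lies in e S, or lies in U S^1; thus S = (e :: U) S^1. *)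

From Stdlib Require Import List.

Section RightIdeals.

Variable S : Type.
Variable mul : S -> S -> S.
Hypothesis assoc : forall x y z, mul x (mul y z) = mul (mul x y) z.

Definition in_right_ideal (U : list S) (s : S) : Prop :=
  exists u, In u U /\ (s = u \/ exists t, s = mul u t).

Lemma in_right_ideal_gen (U : list S) (u : S) : In u U -> in_right_ideal U u.
Proof. intros Hu; exists u; auto. Qed.

Lemma in_right_ideal_mulr (U : list S) (s u : S) :
  in_right_ideal U s -> in_right_ideal U (mul s u).
Proof.
  intros [v [Hv [-> | [w ->]]]]; exists v; split; auto; right.
  - exists u; reflexivity.
  - exists (mul w u); symmetry; apply assoc.
Qed.

Definition rees_rel (P : S -> Prop) (s t : S) : Prop := s = t \/ (P s /\ P t).

Lemma rees_right_congruence (P : S -> Prop) :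
  (forall s u, P s -> P (mul s u)) -> right_congruence mul (rees_rel P).
Proof.
  intros HP; unfold rees_rel; split; [| split; [| split]].
  - left; reflexivity.
  - intros s t [-> | [Hs Ht]]; auto.
  - intros s t u [-> | [Hs Ht]] [-> | [Ht' Hu]]; auto.
  - intros s t u [-> | [Hs Ht]]; auto.
Qed.

Definition pair_entries (X : list (S * S)) : list S := map fst X ++ map snd X.

Lemma gen_right_congruence_rees (X : list (S * S)) (s t : S) :
  gen_right_congruence mul X s t ->
  rees_rel (in_right_ideal (pair_entries X)) s t.
Proof.
  intros Hgen; apply Hgen.
  - apply rees_right_congruence, in_right_ideal_mulr.
  - intros p Hp; right; split; apply in_right_ideal_gen; apply in_or_app.
    + left; apply in_map, Hp.
    + right; apply in_map, Hp.
Qed.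

End RightIdeals.

Theorem mainTheorem13 (S : Type) (mul : S -> S -> S)
  (assoc : forall x y z, mul x (mul y z) = mul (mul x y) z)
  (a : S) (haS : exists s, a = mul a s)
  (hfg : fg_right_congruence mul (rann mul a)) :
  exists U : list S, forall s : S,
    exists u, In u U /\ (s = u \/ exists t, s = mul u t).
Proof.
  destruct haS as [e He], hfg as [X HX].
  exists (e :: pair_entries S X); intros s.
  assert (Hann : rann mul a s (mul e s)).
  { unfold rann; rewrite assoc, <- He; reflexivity. }
  apply HX, (gen_right_congruence_rees S mul assoc) in Hann.
  destruct Hann as [Hs | [[u [Hu Hs]] _]].
  - exists e; split; [left; reflexivity | right; exists s; exact Hs].
  - exists u; split; [right; exact Hu | exact Hs].
Qed.
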